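(* Let $N\ge1$, $\Psi_N$ the $N\times N$ matrix $(\Psi_N)_{jk}=\binom{j}{k}$, $\Lambda_N=\mathrm{diag}(1,-1,\dots,(-1)^{N-1})$, and $J_N$ the $N\times N$ symmetric tridiagonal matrix with $(J_N)_{kk}=k(2k^2+3k+2-N^2)$ and $(J_N)_{k,k+1}=(J_N)_{k+1,k}=(k+1)(N^2-(k+1)^2)$. Then $$\Psi_N^{-1}J_N\Psi_N=-\Lambda_NJ_N\Lambda_N+(N^2-1)I_N,$$ and moreover $(\Psi_N\Lambda_N)^2=I_N$ and $\Psi_N^\intercal\Psi_N=\Lambda_NT_N^{-1}\Lambda_N$, where $(T_N)_{jk}=\binom{j+k}{j}$.
   Context: Matrix indices start at $0$; $I_N$ is the $N\times N$ identity matrix. *)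

From mathcomp Require Import all_boot all_order all_algebra.
Set Implicit Arguments. Unset Strict Implicit. Unset Printing Implicit Defensive.
Import Order.TTheory GRing.Theory Num.Theory.
Local Open Scope ring_scope.

Definition PsiN (N : nat) : 'M[rat]_N := \matrix_(j < N, k < N) ('C(j, k))%:R.

Definition LambdaN (N : nat) : 'M[rat]_N := diag_mx (\row_(i < N) (-1) ^+ i).

Definition TN (N : nat) : 'M[rat]_N := \matrix_(j < N, k < N) ('C(j + k, j))%:R.

Definition JN (N : nat) : 'M[rat]_N :=
  \matrix_(j < N, k < N)
    (if j == k :> nat then
       (k%:R : rat) * (2 * (k%:R) ^+ 2 + 3 * k%:R + 2 - (N%:R) ^+ 2)
     else if j == k.+1 :> nat then
       (k.+1%:R : rat) * ((N%:R) ^+ 2 - (k.+1%:R) ^+ 2)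
     else if k == j.+1 :> nat then
       (j.+1%:R : rat) * ((N%:R) ^+ 2 - (j.+1%:R) ^+ 2)
     else 0).

From mathcomp Require Import all_boot all_order all_algebra.
From mathcomp Require Import zify ring lra.
Import Order.TTheory GRing.Theory Num.Theory.
Local Open Scope ring_scope.

(* Binomial inversion, sum_i (-1)^i C(j,i) C(i,k) = (-1)^j [j = k], says that Psi Lambda is an
   involution, so Psi^-1 = Lambda Psi Lambda; Vandermonde's identity gives T = Psi Psi^T, whence
   T^-1 = Lambda Psi^T Psi Lambda.  The similarity is equivalent to J Psi = Psi (-Lambda J Lambda
   + (N^2-1) I); as J is tridiagonal, each entry of this is a three-term binomial identity, valid
   for every value of the parameter N^2.  It is a rational-function identity once the neighbouring
   binomial coefficients are written as rational multiples of one of them.  Truncating to N x N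
   costs nothing because the superdiagonal entry of J leaving the last row, N (N^2 - N^2), vanishes. *)

Lemma big_nat_supported (R : nmodType) (a b n : nat) (F : nat -> R) :
  (a <= b <= n)%N -> (forall i, (i < a)%N || (b <= i)%N -> F i = 0) ->
  \sum_(0 <= i < n) F i = \sum_(a <= i < b) F i.
Proof.
move=> /andP[hab hbn] F0.
rewrite (big_cat_nat (leq0n a)) ?(leq_trans hab) //= (big_cat_nat hab hbn) /=.
rewrite [\sum_(0 <= i < a) _]big1_seq ?add0r => [|i /=]; last first.
  by rewrite mem_index_iota => /andP[_ hi]; rewrite F0 ?hi.
rewrite [\sum_(b <= i < n) _]big1_seq ?addr0 // => i /=.
by rewrite mem_index_iota => /andP[hi _]; rewrite F0 ?hi ?orbT.
Qed.

Lemma big_ord_tridiag (R : nmodType) (n c : nat) (F : nat -> R) :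
  (c < n)%N -> F n = 0 -> (forall i, (i.+1 < c)%N || (c.+1 < i)%N -> F i = 0) ->
  \sum_(i < n) F i = (if c is c'.+1 then F c' else 0) + F c + F c.+1.
Proof.
move=> hc Fn F0.
have -> : \sum_(i < n) F i = \sum_(0 <= i < n.+1) F i.
  by rewrite big_nat_recr //= Fn addr0 big_mkord.
rewrite (@big_nat_supported _ c.-1 c.+2) => [||i hi]; last 2 first.
- by apply/andP; lia.
- by apply: F0; lia.
case: c {hc F0} => [|c] /=.
  by rewrite big_ltn // big_ltn // big_geq // add0r addr0.
rewrite big_ltn 1?big_ltn 1?big_ltn ?big_geq ?addr0 ?addrA //; lia.
Qed.

Lemma sum_signed_binomial_binomial (R : comNzRingType) (j k : nat) :
  \sum_(0 <= i < j.+1) (-1) ^+ i * 'C(j, i)%:R * 'C(i, k)%:R = (-1) ^+ j * (j == k)%:R :> R.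
Proof.
elim: j k => [|j IH] k; first by rewrite big_nat1 bin0 expr0 !mul1r bin0n eq_sym.
have Pascal_step : \sum_(0 <= i < j.+2) (-1) ^+ i * 'C(j.+1, i)%:R * 'C(i, k)%:R
    = \sum_(0 <= i < j.+2) (-1) ^+ i * 'C(j, i)%:R * 'C(i, k)%:R
      - \sum_(0 <= i < j.+1) (-1) ^+ i * 'C(j, i)%:R * 'C(i.+1, k)%:R :> R.
  rewrite big_nat_recl // [X in _ = X - _]big_nat_recl // !bin0 -addrA; congr (_ + _).
  rewrite -sumrB; apply: eq_bigr => i _; rewrite binS natrD exprS; ring.
rewrite Pascal_step big_nat_recr //= bin_small // mulr0 mul0r addr0.
case: k {Pascal_step} => [|k].
  under [X in _ - X]eq_bigr => i _ do rewrite bin0 -(bin0 i).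
  by rewrite subrr mulr0.
under [X in _ - X]eq_bigr => i _ do rewrite binS natrD mulrDr.
rewrite big_split /= !IH eqSS exprS; ring.
Qed.

Lemma invmx_right_inverse (R : comUnitRingType) (n : nat) (A X : 'M[R]_n) :
  A *m X = 1%:M -> invmx A = X.
Proof.
move=> AX; have [Aunit _] := mulmx1_unit AX.
by rewrite -[invmx A]mulmx1 -AX mulmxA mulVmx // mul1mx.
Qed.

Lemma LambdaN_conjE (N : nat) (A : 'M[rat]_N) (i k : 'I_N) :
  (LambdaN N *m A *m LambdaN N) i k = (-1) ^+ (i + k) * A i k.
Proof. by rewrite /LambdaN mul_mx_diag mul_diag_mx !mxE exprD mulrAC. Qed.

Lemma LambdaN_involutive (N : nat) : LambdaN N *m LambdaN N = 1%:M.
Proof.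
apply/matrixP => i k; rewrite /LambdaN mul_diag_mx !mxE.
by case: eqP => [->|]; rewrite ?mulr0n ?mulr0 // mulr1n -expr2 sqrr_sign.
Qed.

Lemma PsiN_LambdaN_involutive (N : nat) :
  (PsiN N *m LambdaN N) *m (PsiN N *m LambdaN N) = 1%:M.
Proof.
apply/matrixP => j k; rewrite /LambdaN !mul_mx_diag !mxE.
under eq_bigr => i _ do rewrite !mxE.
rewrite -(big_mkord xpredT (fun i => 'C(j, i)%:R * (-1) ^+ i * ('C(i, k)%:R * (-1) ^+ k))).
rewrite (@big_nat_supported _ 0 j.+1) => [||i]; last 2 first.
- by rewrite /=; apply: ltn_ord.
- by rewrite /= => /bin_small ->; rewrite !mul0r.
have -> : \sum_(0 <= i < j.+1) 'C(j, i)%:R * (-1) ^+ i * ('C(i, k)%:R * (-1) ^+ k)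
    = (-1) ^+ k * \sum_(0 <= i < j.+1) (-1) ^+ i * 'C(j, i)%:R * 'C(i, k)%:R :> rat.
  by rewrite big_distrr; apply: eq_bigr => i _ /=; ring.
rewrite sum_signed_binomial_binomial.
by case: (eqVneq j k) => [->|/negbTE jk]; rewrite ?val_eqE ?eqxx ?jk /= ?mulr0 // mulr1 -expr2 sqrr_sign.
Qed.

Lemma PsiN_rinv (N : nat) : PsiN N *m (LambdaN N *m PsiN N *m LambdaN N) = 1%:M.
Proof. by rewrite !mulmxA -(PsiN_LambdaN_involutive N) !mulmxA. Qed.

Lemma PsiN_unit (N : nat) : PsiN N \in unitmx.
Proof. by case: (mulmx1_unit (PsiN_rinv N)). Qed.

Lemma TN_Vandermonde (N : nat) : TN N = PsiN N *m (PsiN N)^T.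
Proof.
apply/matrixP => j k; rewrite !mxE.
under eq_bigr => i _ do rewrite !mxE -natrM.
rewrite -natr_sum; congr _%:R.
rewrite addnC -binomial.Vandermonde -(big_mkord xpredT (fun i => 'C(j, i) * 'C(k, i))%N).
rewrite (@big_nat_supported _ 0 j.+1) ?big_mkord => [||i]; last 2 first.
- by rewrite /=; apply: ltn_ord.
- by rewrite /= => /bin_small ->.
by apply: eq_bigr => i _; rewrite bin_sub ?(leq_ord i) // mulnC.
Qed.

Lemma PsiN_gram (N : nat) :
  (PsiN N)^T *m PsiN N = LambdaN N *m invmx (TN N) *m LambdaN N.
Proof.
have LambdaN_sym : (LambdaN N)^T = LambdaN N by rewrite tr_diag_mx.
have PsiN_conj : PsiN N *m LambdaN N *m PsiN N = LambdaN N.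
  by rewrite -[RHS]mul1mx -(PsiN_LambdaN_involutive N) -!mulmxA LambdaN_involutive mulmx1.
have -> : invmx (TN N) = LambdaN N *m ((PsiN N)^T *m PsiN N) *m LambdaN N.
  apply: invmx_right_inverse; rewrite TN_Vandermonde.
  have PsiTN_conj : (PsiN N)^T *m LambdaN N *m (PsiN N)^T = LambdaN N.
    by rewrite -{1}LambdaN_sym -!trmx_mul mulmxA PsiN_conj LambdaN_sym.
  transitivity (PsiN N *m ((PsiN N)^T *m LambdaN N *m (PsiN N)^T) *m PsiN N *m LambdaN N).
    by rewrite !mulmxA.
  by rewrite PsiTN_conj -(PsiN_LambdaN_involutive N) !mulmxA.
by rewrite !mulmxA LambdaN_involutive mul1mx -mulmxA LambdaN_involutive mulmx1.
Qed.

Definition jacobi_diag (n : rat) (k : nat) : rat :=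
  k%:R * (2 * k%:R ^+ 2 + 3 * k%:R + 2 - n ^+ 2).

Definition jacobi_off (n : rat) (k : nat) : rat := k.+1%:R * (n ^+ 2 - k.+1%:R ^+ 2).

Definition jacobi (n : rat) (j k : nat) : rat :=
  if j == k then jacobi_diag n k
  else if j == k.+1 then jacobi_off n k
  else if k == j.+1 then jacobi_off n j
  else 0.

Lemma JN_jacobi (N : nat) (j k : 'I_N) : JN N j k = jacobi N%:R j k.
Proof. by rewrite mxE. Qed.

Lemma jacobi_diagE (n : rat) (k : nat) : jacobi n k k = jacobi_diag n k.
Proof. by rewrite /jacobi eqxx. Qed.

Lemma jacobi_subE (n : rat) (k : nat) : jacobi n k.+1 k = jacobi_off n k.
Proof. by rewrite /jacobi eqxx (gtn_eqF (ltnSn k)). Qed.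

Lemma jacobi_supE (n : rat) (k : nat) : jacobi n k k.+1 = jacobi_off n k.
Proof. by rewrite /jacobi eqxx (ltn_eqF (ltnSn k)) (ltn_eqF (ltnW (ltnSn _))). Qed.

Lemma jacobi_far (n : rat) (j k : nat) : (k.+1 < j)%N || (j.+1 < k)%N -> jacobi n j k = 0.
Proof. by move=> far; rewrite /jacobi !ifF //; apply/eqP; lia. Qed.

Lemma jacobi_last_col (N j : nat) : (j < N)%N -> jacobi N%:R j N = 0.
Proof.
case: (ltngtP j.+1 N) => // [far _|<- _]; first by rewrite jacobi_far //; apply/orP; right.
by rewrite jacobi_supE /jacobi_off subrr mulr0.
Qed.

Lemma natr_eq_div (a b c : nat) : (0 < a)%N -> (a * b = c)%N -> b%:R = c%:R / a%:R :> rat.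
Proof. by move=> a_gt0 <-; rewrite natrM mulrAC mulfV ?mul1r // pnatr_eq0 -lt0n. Qed.

Lemma jacobi_binomial (n : rat) (j k : nat) :
  (if j is j'.+1 then jacobi_off n j' * 'C(j', k)%:R else 0)
  + jacobi_diag n j * 'C(j, k)%:R + jacobi_off n j * 'C(j.+1, k)%:R
  = (if k is k'.+1 then 'C(j, k')%:R * jacobi_off n k' else 0)
    - 'C(j, k)%:R * jacobi_diag n k + 'C(j, k.+1)%:R * jacobi_off n k
    + (n ^+ 2 - 1) * 'C(j, k)%:R.
Proof.
rewrite /jacobi_diag /jacobi_off.
case: j => [|j]; first by case: k => [|[|k]]; rewrite ?bin0 ?bin1 ?binS ?bin0n /=; ring.
case: k => [|k]; first by rewrite !bin0 bin1; ring.
have [kj|jk] := leqP k j; last first.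
  have [j1k|<-] : (j.+1 < k)%N \/ j.+1 = k by lia.
  - by rewrite !bin_small; [ring | lia..].
  - by rewrite !binn !bin_small; [ring | lia..].
have [d ->] : exists d, j = (k + d)%N by exists (j - k)%N; lia.
(* Each neighbouring binomial coefficient is a rational multiple of b. *)
set b : rat := 'C((k + d).+1, k.+1)%:R.
rewrite (@natr_eq_div (k + d).+1 'C(k + d, k.+1) (d * 'C((k + d).+1, k.+1))) //; last first.
  by rewrite (mul_bin_down (k + d).+1) subSS addKn.
rewrite (@natr_eq_div k.+2 'C((k + d).+1, k.+2) (d * 'C((k + d).+1, k.+1))) //; last first.
  by rewrite mul_bin_left subSS addKn.
rewrite (@natr_eq_div d.+1 'C((k + d).+1, k) (k.+1 * 'C((k + d).+1, k.+1))) //; last first.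
  by rewrite mul_bin_left -addnS addKn.
rewrite (@natr_eq_div d.+1 'C((k + d).+2, k.+1) ((k + d).+2 * 'C((k + d).+1, k.+1))) //; last first.
  by rewrite (mul_bin_down (k + d).+2) subSS -addnS addKn.
rewrite !natrM -/b -!natr1 !natrD.
by field; rewrite -natrD !natr1 !pnatr_eq0.
Qed.

Lemma JN_mulmx_PsiN (N : nat) :
  JN N *m PsiN N
  = PsiN N *m (- (LambdaN N *m JN N *m LambdaN N) + ((N ^ 2)%:R - 1) *: 1%:M).
Proof.
apply/matrixP => j k.
rewrite mulmxDr mulmxN -scalemxAr mulmx1 !mxE.
under eq_bigr => i _ do rewrite JN_jacobi mxE.
under [X in _ = - X + _]eq_bigr => i _ do rewrite LambdaN_conjE JN_jacobi mxE.
rewrite (@big_ord_tridiag _ N j (fun i => jacobi N%:R j i * 'C(i, k)%:R))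
  ?jacobi_last_col ?mul0r //; last first.
  by move=> i far; rewrite jacobi_far ?mul0r // orbC.
rewrite (@big_ord_tridiag _ N k (fun i => 'C(j, i)%:R * ((-1) ^+ (i + k) * jacobi N%:R i k)))
  ?(bin_small (ltn_ord j)) ?mul0r //; last first.
  by move=> i far; rewrite jacobi_far ?mulr0 // orbC.
have sign_even m : (-1) ^+ (m + m) = 1 :> rat by rewrite exprD -expr2 sqrr_sign.
have sign_odd m : (-1) ^+ (m.+1 + m) = -1 :> rat by rewrite addSn exprS sign_even mulr1.
have sign_odd' m : (-1) ^+ (m + m.+1) = -1 :> rat by rewrite addnC.
have := jacobi_binomial N%:R j k; rewrite natrX.
case: j k => [[|j] _] [[|k] _] /=;
  rewrite ?sign_even ?sign_odd ?sign_odd' ?jacobi_diagE ?jacobi_supE ?jacobi_subE; lra.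
Qed.

Theorem mainTheorem8 (N : nat) (hN : (1 <= N)%N) :
  invmx (PsiN N) *m JN N *m PsiN N
    = - (LambdaN N *m JN N *m LambdaN N) + ((N ^ 2)%:R - 1) *: 1%:M
  /\ (PsiN N *m LambdaN N) *m (PsiN N *m LambdaN N) = 1%:M
  /\ (PsiN N)^T *m PsiN N = LambdaN N *m invmx (TN N) *m LambdaN N.
Proof.
split; last split.
- by rewrite -mulmxA JN_mulmx_PsiN mulmxA mulVmx ?PsiN_unit // mul1mx.
- exact: PsiN_LambdaN_involutive.
- exact: PsiN_gram.
Qed.
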